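(* Let $\mathcal{H}_A$ have orthonormal basis $\ket{1},\ldots,\ket{N}$ and $\mathcal{H}_R$ be a finite-dimensional Hilbert space. Fix $i$ and a unitary $U$ on $\mathcal{H}_R$, and let $O_i$ be the unitary on $\mathcal{H}_A\otimes\mathcal{H}_R$ with $O_i\ket{i}\otimes\ket{w}=\ket{i}\otimes\ket{Uw}$ and $O_i\ket{j}\otimes\ket{w}=\ket{j}\otimes\ket{w}$ for $j\neq i$; assume $O_i$ is self-adjoint. For $p\in[0,1]$ let $\mathcal{F}_i^p(\rho)=(1-p)\rho+p\,O_i\rho O_i^\dagger$, and let $P_i=\ket{i}\bra{i}\otimes\mathrm{Id}$. Let $0<\eta<1$. Then for all density matrices $\rho,\sigma$ on $\mathcal{H}_A\otimes\mathcal{H}_R$ and all $p,q\in[\eta,1-\eta]$, $$\sqrt{F}(\mathcal{F}_i^p(\rho),\mathcal{F}_i^q(\sigma))\geq\sqrt{F}(\rho,\sigma)-\frac{(p-q)^2}{\eta(1-\eta)}\sqrt{\mathrm{tr}(P_i\rho)\,\mathrm{tr}(P_i\sigma)}.$$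
   Context: For density matrices $\rho,\sigma$ the (root) fidelity is $\sqrt{F}(\rho,\sigma)=\mathrm{tr}\sqrt{\rho^{1/2}\sigma\rho^{1/2}}$. *)

From HB Require Import structures.
From mathcomp Require Import all_boot all_order all_algebra.
From mathcomp Require Import sesquilinear spectral complex mxtens.
From mathcomp Require Import boolp classical_sets reals.
Set Implicit Arguments. Unset Strict Implicit. Unset Printing Implicit Defensive.
Import Order.TTheory GRing.Theory Num.Theory.
Local Open Scope ring_scope.
Local Open Scope sesquilinear_scope.

Definition adjmx (R : realType) m n (A : 'M[R[i]]_(m, n)) : 'M[R[i]]_(n, m) :=
  A ^t*.

Definition psdmx (R : realType) n (A : 'M[R[i]]_n) : Prop :=
  A \is hermsymmx /\ forall v : 'cV[R[i]]_n, 0 <= (v ^t* *m A *m v) 0 0.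

Definition density (R : realType) n (rho : 'M[R[i]]_n) : Prop :=
  psdmx rho /\ \tr rho = 1.

(* The positive semidefinite square root A^{1/2} of a PSD matrix A:
   a PSD matrix B with B B = A (unique when A is PSD), chosen by
   classical choice; 0 if no such B exists (never happens for PSD A). *)
Definition msqrt (R : realType) n (A : 'M[R[i]]_n) : 'M[R[i]]_n :=
  xget 0 [set B : 'M[R[i]]_n | psdmx B /\ B *m B = A].

Definition root_fid (R : realType) n (rho sigma : 'M[R[i]]_n) : R[i] :=
  \tr (msqrt (msqrt rho *m sigma *m msqrt rho)).

(* By Uhlmann's theorem, root_fid rho sigma is the largest overlap
   |tr (X^† Y)| over all factorizations rho = X X^†, sigma = Y Y^†; fix an
   optimal pair, with overlap F.  The channel outputs factor as
   F_p(rho) = X' X'^† with X' = [√(1-p) X, √p O X], and likewise for sigma, where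
   the second factor may be further rotated by any real 2x2 rotation.  Since O is a
   self-adjoint unitary, the rotation that aligns (√(1-q), √q) with (√(1-p), √p)
   gives the overlap F + s^2 (tr (X^† O Y) - F), where s is the sine of the angle
   between these two unit vectors.  As O - 1 lives on the range of P, Cauchy-Schwarz
   gives |tr (X^† (O - 1) Y)| <= 2 sqrt (tr (P rho) tr (P sigma)), and finally
   2 s^2 <= (p - q)^2 / (eta (1 - eta)) for p, q in [eta, 1 - eta]. *)

From HB Require Import structures.
From mathcomp Require Import all_boot all_order all_algebra.
From mathcomp Require Import sesquilinear spectral complex mxtens.
From mathcomp Require Import boolp classical_sets reals.
From mathcomp Require Import ring lra.
Set Implicit Arguments. Unset Strict Implicit. Unset Printing Implicit Defensive.
Import Order.TTheory GRing.Theory Num.Theory.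
Local Open Scope ring_scope.
Local Open Scope sesquilinear_scope.

Section ConjugateTranspose.
Variable C : numClosedFieldType.

Lemma trmxC_mul m n p (A : 'M[C]_(m, n)) (B : 'M[C]_(n, p)) :
  (A *m B)^t* = B^t* *m A^t*.
Proof. by rewrite trmx_mul map_mxM. Qed.

Lemma trmxCD m n (A B : 'M[C]_(m, n)) : (A + B)^t* = A^t* + B^t*.
Proof. by rewrite linearD /= map_mxD. Qed.

Lemma trmxCB m n (A B : 'M[C]_(m, n)) : (A - B)^t* = A^t* - B^t*.
Proof. by rewrite linearB /= map_mxB. Qed.

Lemma trmxCZ m n (a : C) (A : 'M[C]_(m, n)) : (a *: A)^t* = a^* *: A^t*.
Proof. by rewrite linearZ /= map_mxZ. Qed.

Lemma trmxC1 n : (1%:M : 'M[C]_n)^t* = 1%:M.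
Proof. by rewrite trmx1 map_mx1. Qed.

Lemma trmxC0 m n : (0 : 'M[C]_(m, n))^t* = 0.
Proof. by rewrite trmx0 map_mx0. Qed.

Lemma trmxC_row_mx m n1 n2 (A : 'M[C]_(m, n1)) (B : 'M[C]_(m, n2)) :
  (row_mx A B)^t* = col_mx (A^t*) (B^t*).
Proof. by rewrite tr_row_mx map_col_mx. Qed.

Lemma mxtrace_trmxC n (A : 'M[C]_n) : \tr (A^t*) = (\tr A)^*.
Proof. by rewrite /mxtrace rmorph_sum; apply: eq_bigr => j _; rewrite !mxE. Qed.

Lemma gram_row_mx m k1 k2 (A : 'M[C]_(m, k1)) (B : 'M[C]_(m, k2)) :
  row_mx A B *m (row_mx A B)^t* = A *m A^t* + B *m B^t*.
Proof. by rewrite trmxC_row_mx mul_row_col. Qed.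

Lemma gram_mulmx_unitary m k (G : 'M[C]_(m, k)) (V : 'M[C]_k) :
  V \is unitarymx -> (G *m V) *m (G *m V)^t* = G *m G^t*.
Proof. by move=> uV; rewrite trmxC_mul mulmxA mulmxtVK. Qed.

Lemma trmxC_tens m1 n1 m2 n2 (A : 'M[C]_(m1, n1)) (B : 'M[C]_(m2, n2)) :
  (A *t B)^t* = A^t* *t B^t*.
Proof. by rewrite trmx_tens map_mxT. Qed.

Lemma trmxC_delta m n (i : 'I_m) (j : 'I_n) :
  (delta_mx i j : 'M[C]_(m, n))^t* = delta_mx j i.
Proof. by apply/matrixP => a b; rewrite !mxE rmorph_nat andbC. Qed.

Lemma hermsymmxP n (A : 'M[C]_n) : reflect (A^t* = A) (A \is hermsymmx).
Proof.
apply: (iffP (@is_hermitianmxP _ _ false _ A)); rewrite expr0 scale1r => AE.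
  by rewrite -AE.
by rewrite AE.
Qed.

End ConjugateTranspose.

Section HilbertSchmidt.
Variable C : numClosedFieldType.

Definition hsdot m k (A B : 'M[C]_(m, k)) : C := \tr (A^t* *m B).

Lemma hsdotC m k (A B : 'M[C]_(m, k)) : hsdot B A = (hsdot A B)^*.
Proof. by rewrite /hsdot -mxtrace_trmxC trmxC_mul trmxCK. Qed.

Lemma hsdotDr m k (A B B' : 'M[C]_(m, k)) :
  hsdot A (B + B') = hsdot A B + hsdot A B'.
Proof. by rewrite /hsdot mulmxDr mxtraceD. Qed.

Lemma hsdotBr m k (A B B' : 'M[C]_(m, k)) :
  hsdot A (B - B') = hsdot A B - hsdot A B'.
Proof. by rewrite /hsdot mulmxBr linearB. Qed.

Lemma hsdotBl m k (A A' B : 'M[C]_(m, k)) :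
  hsdot (A - A') B = hsdot A B - hsdot A' B.
Proof. by rewrite /hsdot trmxCB mulmxBl linearB. Qed.

Lemma hsdotZr m k (a : C) (A B : 'M[C]_(m, k)) :
  hsdot A (a *: B) = a * hsdot A B.
Proof. by rewrite /hsdot -scalemxAr mxtraceZ. Qed.

Lemma hsdotZl m k (a : C) (A B : 'M[C]_(m, k)) :
  hsdot (a *: A) B = a^* * hsdot A B.
Proof. by rewrite /hsdot trmxCZ -scalemxAl mxtraceZ. Qed.

Lemma hsdot_mull m k (M : 'M[C]_m) (A B : 'M[C]_(m, k)) :
  hsdot (M *m A) B = hsdot A (M^t* *m B).
Proof. by rewrite /hsdot trmxC_mul mulmxA. Qed.

Lemma hsdot_row_mx m k1 k2 (A1 B1 : 'M[C]_(m, k1)) (A2 B2 : 'M[C]_(m, k2)) :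
  hsdot (row_mx A1 A2) (row_mx B1 B2) = hsdot A1 B1 + hsdot A2 B2.
Proof. by rewrite /hsdot trmxC_row_mx mul_col_row mxtrace_block. Qed.

Lemma hsdotxxE m k (A : 'M[C]_(m, k)) :
  hsdot A A = \sum_i \sum_j A j i * (A j i)^*.
Proof.
rewrite /hsdot /mxtrace; apply: eq_bigr => i _; rewrite !mxE.
by apply: eq_bigr => j _; rewrite !mxE mulrC.
Qed.

Lemma hsdotxx_ge0 m k (A : 'M[C]_(m, k)) : 0 <= hsdot A A.
Proof. by rewrite hsdotxxE; do 2![apply: sumr_ge0 => ? _]; apply: mul_conjC_ge0. Qed.

Lemma hsdotxx_eq0 m k (A : 'M[C]_(m, k)) : hsdot A A = 0 -> A = 0.
Proof.
rewrite hsdotxxE => A0; apply/matrixP => j i; rewrite mxE.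
have Ai0 := psumr_eq0P (fun i _ => sumr_ge0 _ (fun j _ => mul_conjC_ge0 (A j i))) A0.
have := psumr_eq0P (fun j _ => mul_conjC_ge0 (A j i)) (Ai0 i isT) (i := j) isT.
by move/eqP; rewrite mul_conjC_eq0 => /eqP.
Qed.

Lemma hsdot_CauchySchwarz m k (A B : 'M[C]_(m, k)) :
  `|hsdot A B| ^+ 2 <= hsdot A A * hsdot B B.
Proof.
have [/hsdotxx_eq0 ->|nzA] := eqVneq (hsdot A A) 0.
  by rewrite /hsdot trmxC0 !mul0mx mxtrace0 normr0 expr0n mul0r.
have a_gt0 : 0 < hsdot A A by rewrite lt_def nzA hsdotxx_ge0.
set a := hsdot A A; set t := hsdot A B.
have a_real : a^* = a by apply/conj_Creal/gtr0_real.
have := hsdotxx_ge0 (a *: B - t *: A).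
rewrite hsdotBl !hsdotBr !hsdotZl !hsdotZr -/a -/t (hsdotC A B) -/t a_real normCK.
have -> : a * (a * hsdot B B) - a * (t * t^*) - (t^* * (a * t) - t^* * (t * a))
          = a * (a * hsdot B B - t * t^*) by ring.
by rewrite pmulr_rge0 // subr_ge0 mulrC.
Qed.

Lemma norm_hsdot_le m k (A B : 'M[C]_(m, k)) :
  `|hsdot A B| <= sqrtC (hsdot A A * hsdot B B).
Proof.
rewrite -(sqrCK (normr_ge0 (hsdot A B))) ler_sqrtC ?hsdot_CauchySchwarz //.
  by rewrite nnegrE exprn_ge0.
by rewrite nnegrE mulr_ge0 ?hsdotxx_ge0.
Qed.

End HilbertSchmidt.

Section FunctionalCalculus.
Variables (C : numClosedFieldType) (n : nat) (A : 'M[C]_n).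
Local Notation Q := (spectralmx A).
Local Notation d := (spectral_diag A).

Definition fmx (f : C -> C) : 'M[C]_n := Q^t* *m diag_mx (\row_j f (d 0 j)) *m Q.

Lemma mul_spectralmx_trmxC : Q *m Q^t* = 1%:M.
Proof. exact/unitarymxP/spectral_unitarymx. Qed.

Lemma fmx_mul f g : fmx f *m fmx g = fmx (fun x => f x * g x).
Proof.
rewrite /fmx !mulmxA -(mulmxA _ Q) mul_spectralmx_trmxC mulmx1 -(mulmxA (Q^t*)).
by rewrite mulmx_diag; congr (_ *m diag_mx _ *m _); apply/rowP => j; rewrite !mxE.
Qed.

Lemma fmx_trmxC f : (fmx f)^t* = fmx (fun x => (f x)^*).
Proof.
rewrite /fmx !trmxC_mul trmxCK mulmxA tr_diag_mx map_diag_mx.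
by congr (_ *m _ *m _); congr diag_mx; apply/rowP => j; rewrite !mxE.
Qed.

Lemma eq_fmx f g : (forall j, f (d 0 j) = g (d 0 j)) -> fmx f = fmx g.
Proof.
by move=> fg; rewrite /fmx; congr (_ *m diag_mx _ *m _); apply/rowP => j; rewrite !mxE.
Qed.

Hypothesis hermA : A \is hermsymmx.

Lemma spectral_diag_real j : d 0 j \is Num.real.
Proof. by have /mxOverP := hermitian_spectral_diag_real hermA; apply. Qed.

Lemma spectral_decomp : A = Q^t* *m diag_mx d *m Q.
Proof.
have /orthomx_spectralP {1}-> := hermitian_normalmx hermA.
by rewrite invmx_unitary ?spectral_unitarymx.
Qed.

Lemma fmx_id : fmx id = A.
Proof.
rewrite [RHS]spectral_decomp /fmx.
by congr (_ *m _ *m _); congr diag_mx; apply/rowP => j; rewrite !mxE.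
Qed.

End FunctionalCalculus.

Section SupportProjection.
Variables (C : numClosedFieldType) (n : nat) (S : 'M[C]_n).

Definition hpinvmx := fmx S (fun x => x^-1).
(* Since 0^-1 = 0, x * x^-1 is the indicator of x != 0: suppmx is the orthogonal
   projection onto the range of S. *)
Definition suppmx := fmx S (fun x => x * x^-1).

Let mulfVK_all (x : C) : x * x^-1 * x = x.
Proof. by have [->|x0] := eqVneq x 0; rewrite ?mulr0 ?mul0r // divfK. Qed.

Let mulfVV_all (x : C) : x * x^-1 * x^-1 = x^-1.
Proof. by have [->|x0] := eqVneq x 0; rewrite ?invr0 ?mulr0 // divff // mul1r. Qed.

Hypothesis hermS : S \is hermsymmx.

Lemma mul_hpinvmx : S *m hpinvmx = suppmx.
Proof. by rewrite /hpinvmx /suppmx -{1}(fmx_id hermS) fmx_mul. Qed.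

Lemma hpinvmx_mul : hpinvmx *m S = suppmx.
Proof.
by rewrite /hpinvmx /suppmx -{2}(fmx_id hermS) fmx_mul; apply: eq_fmx => j; rewrite mulrC.
Qed.

Lemma suppmx_mul : suppmx *m S = S.
Proof.
by rewrite /suppmx -{2 3}(fmx_id hermS) fmx_mul; apply: eq_fmx => j; rewrite mulfVK_all.
Qed.

Lemma mul_suppmx : S *m suppmx = S.
Proof.
by rewrite /suppmx -{1 3}(fmx_id hermS) fmx_mul; apply: eq_fmx => j; rewrite mulrC mulfVK_all.
Qed.

Lemma suppmx_hpinvmx : suppmx *m hpinvmx = hpinvmx.
Proof. by rewrite /hpinvmx /suppmx fmx_mul; apply: eq_fmx => j; rewrite mulfVV_all. Qed.

Lemma suppmx_idem : suppmx *m suppmx = suppmx.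
Proof. by rewrite /suppmx fmx_mul; apply: eq_fmx => j; rewrite mulrA mulfVK_all. Qed.

Lemma suppmx_herm : suppmx^t* = suppmx.
Proof.
rewrite /suppmx fmx_trmxC; apply: eq_fmx => j.
by rewrite conj_Creal // rpredM ?rpredV // spectral_diag_real.
Qed.

Lemma hpinvmx_herm : hpinvmx^t* = hpinvmx.
Proof.
rewrite /hpinvmx fmx_trmxC; apply: eq_fmx => j.
by rewrite conj_Creal // rpredV spectral_diag_real.
Qed.

Lemma suppmx_gram k (X : 'M[C]_(n, k)) : X *m X^t* = S *m S -> suppmx *m X = X.
Proof.
move=> XX; pose E := 1%:M - suppmx.
have ES : E *m S = 0 by rewrite mulmxBl mul1mx suppmx_mul subrr.
have EXE : hsdot ((E *m X)^t*) ((E *m X)^t*) = 0.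
  rewrite /hsdot trmxCK !trmxC_mul mulmxA -(mulmxA E) XX mulmxA ES.
  by rewrite !mul0mx mxtrace0.
have /eqP : E *m X = 0 by rewrite -[E *m X]trmxCK (hsdotxx_eq0 EXE) trmxC0.
by rewrite mulmxBl mul1mx subr_eq0 => /eqP.
Qed.

Lemma polar_factor k (X : 'M[C]_(n, k)) : X *m X^t* = S *m S ->
  exists V, [/\ X = S *m V, V *m V^t* = suppmx & suppmx *m V = V].
Proof.
move=> XX; exists (hpinvmx *m X); split.
- by rewrite mulmxA mul_hpinvmx suppmx_gram.
- rewrite trmxC_mul hpinvmx_herm mulmxA -(mulmxA _ X) XX mulmxA hpinvmx_mul.
  by rewrite -mulmxA mul_hpinvmx suppmx_idem.
- by rewrite mulmxA suppmx_hpinvmx.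
Qed.

End SupportProjection.

Section PositiveSemidefinite.
Variable R : realType.
Local Notation C := R[i].

Lemma psd_conj n k (T : 'M[C]_n) (G : 'M[C]_(n, k)) :
  psdmx T -> psdmx (G^t* *m T *m G).
Proof.
case=> /hermsymmxP hermT T_ge0; split.
  by apply/hermsymmxP; rewrite !trmxC_mul trmxCK hermT mulmxA.
move=> v; have -> : v^t* *m (G^t* *m T *m G) *m v = (G *m v)^t* *m T *m (G *m v).
  by rewrite trmxC_mul !mulmxA.
exact: T_ge0.
Qed.

Lemma psd_diag_ge0 n (T : 'M[C]_n) j : psdmx T -> 0 <= T j j.
Proof.
by case=> _ /(_ (delta_mx j 0)); rewrite trmxC_delta -rowE -colE !mxE.
Qed.

Lemma psd_mxtrace_ge0 n (T : 'M[C]_n) : psdmx T -> 0 <= \tr T.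
Proof. by move=> PT; apply: sumr_ge0 => j _; apply: psd_diag_ge0. Qed.

Lemma psd_spectral_diag_ge0 n (T : 'M[C]_n) j : psdmx T -> 0 <= spectral_diag T 0 j.
Proof.
move=> PT; have := psd_diag_ge0 j (psd_conj ((spectralmx T)^t*) PT).
case: PT => /spectral_decomp TE _; set Q := spectralmx T in TE *.
rewrite trmxCK [X in Q *m X]TE !mulmxA mul_spectralmx_trmxC mul1mx.
by rewrite -mulmxA mul_spectralmx_trmxC mulmx1 mxE eqxx mulr1n.
Qed.

Lemma gram_psd n k (G : 'M[C]_(n, k)) : psdmx (G *m G^t*).
Proof.
split; first by apply/hermsymmxP; rewrite trmxC_mul trmxCK.
move=> v; have -> : v^t* *m (G *m G^t*) *m v = (G^t* *m v)^t* *m (G^t* *m v).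
  by rewrite trmxC_mul trmxCK !mulmxA.
by rewrite -trace_mx11; apply: hsdotxx_ge0.
Qed.

Lemma msqrtP n (A : 'M[C]_n) : psdmx A -> psdmx (msqrt A) /\ msqrt A *m msqrt A = A.
Proof.
move=> PA; rewrite /msqrt; apply: (@xgetPex _ 0 [set B | psdmx B /\ B *m B = A]).
pose G := fmx A (fun x => sqrtC (sqrtC x)).
have hermG : G^t* = G.
  rewrite fmx_trmxC; apply: eq_fmx => j.
  by apply/conj_Creal/ger0_real; rewrite !sqrtC_ge0 psd_spectral_diag_ge0.
exists (G *m G^t*); split; first exact: gram_psd.
rewrite hermG !fmx_mul -[RHS](fmx_id PA.1); apply: eq_fmx => j.
by rewrite -!expr2 !sqrtCK.
Qed.

Lemma mxtrace_compress_le n k (S T : 'M[C]_n) (M : 'M[C]_(n, k)) :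
  S \is hermsymmx -> M *m M^t* = suppmx S -> psdmx T ->
  \tr (M^t* *m T *m M) <= \tr T.
Proof.
move=> hermS MM PT; pose E := 1%:M - suppmx S.
have EE : E *m E^t* = E.
  rewrite trmxCB trmxC1 suppmx_herm // mulmxBl !mulmxBr !mul1mx mulmx1.
  by rewrite suppmx_idem // subrr subr0.
have -> : \tr T = \tr (M^t* *m T *m M) + \tr (E^t* *m T *m E).
  rewrite -[in LHS](mulmx1 T) -(subrK (suppmx S) 1%:M) -/E -MM -{1}EE mulmxDr mxtraceD.
  by rewrite addrC !mulmxA ![\tr (_ *m _^t*)]mxtrace_mulC !mulmxA.
by rewrite lerDl; apply/psd_mxtrace_ge0/psd_conj.
Qed.

End PositiveSemidefinite.

Section Uhlmann.
Variables (R : realType) (n : nat).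
Local Notation C := R[i].

Lemma root_fid_polar (rho sigma : 'M[C]_n) : psdmx rho -> psdmx sigma ->
  let S := msqrt rho in let T := msqrt (S *m sigma *m S) in
  psdmx T /\ exists J,
    [/\ S *m msqrt sigma = T *m J, J *m J^t* = suppmx T & suppmx T *m J = J].
Proof.
move=> Prho Psig S T.
have [[/hermsymmxP hermS _] _] := msqrtP Prho.
have [[/hermsymmxP hermR _] RR] := msqrtP Psig.
have ZZ : (S *m msqrt sigma) *m (S *m msqrt sigma)^t* = S *m sigma *m S.
  by rewrite trmxC_mul hermS hermR -{3}RR !mulmxA.
have [PT TT] : psdmx T /\ T *m T = S *m sigma *m S.
  by apply/msqrtP; rewrite -ZZ; apply: gram_psd.
by split=> //; apply: polar_factor; [exact: PT.1 | rewrite ZZ TT].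
Qed.

Lemma norm_hsdot_le_root_fid k (X Y : 'M[C]_(n, k)) :
  `|hsdot X Y| <= root_fid (X *m X^t*) (Y *m Y^t*).
Proof.
have [PT [J [SRE JJ _]]] := root_fid_polar (gram_psd X) (gram_psd Y).
have [[hermS _] SS] := msqrtP (gram_psd X).
have [[hermR _] RR] := msqrtP (gram_psd Y).
rewrite /root_fid; set S := msqrt (X *m X^t*) in PT SRE JJ hermS SS *.
set Rm := msqrt (Y *m Y^t*) in SRE hermR RR.
set T := msqrt (S *m (Y *m Y^t*) *m S) in PT SRE JJ *.
have [V [XV VV _]] := polar_factor hermS (esym SS).
have [W [YW WW _]] := polar_factor hermR (esym RR).
have [[hermH _] HH] := msqrtP PT; set H := msqrt T in hermH HH.
have hermT := PT.1.
have trXY : hsdot X Y = hsdot (H *m V) (H *m (J *m W)).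
  rewrite XV YW !hsdot_mull (hermsymmxP _ hermS) (hermsymmxP _ hermH) !mulmxA.
  by rewrite SRE -HH.
have hsHX (Z : 'M[C]_(n, k)) : hsdot (H *m Z) (H *m Z) = \tr (Z^t* *m T *m Z).
  by rewrite hsdot_mull (hermsymmxP _ hermH) mulmxA HH /hsdot mulmxA.
have normV : hsdot (H *m V) (H *m V) <= \tr T.
  by rewrite hsHX; apply: mxtrace_compress_le hermS VV PT.
have normJW : hsdot (H *m (J *m W)) (H *m (J *m W)) <= \tr T.
  have := le_trans (mxtrace_compress_le hermR WW (psd_conj J PT))
                   (mxtrace_compress_le hermT JJ PT).
  by rewrite hsHX trmxC_mul !mulmxA.
rewrite trXY; apply: le_trans (norm_hsdot_le _ _) _.
have trT0 := psd_mxtrace_ge0 PT.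
rewrite -[leRHS](sqrCK trT0) ler_sqrtC ?nnegrE ?exprn_ge0 ?mulr_ge0 ?hsdotxx_ge0 //.
by rewrite expr2; exact: ler_pM (hsdotxx_ge0 _) (hsdotxx_ge0 _) normV normJW.
Qed.

Lemma root_fid_attained (rho sigma : 'M[C]_n) : psdmx rho -> psdmx sigma ->
  exists X Y : 'M[C]_(n, n + n),
    [/\ X *m X^t* = rho, Y *m Y^t* = sigma & hsdot X Y = root_fid rho sigma].
Proof.
move=> Prho Psig; have [PT [J [SRE JJ suppJ]]] := root_fid_polar Prho Psig.
have [[/hermsymmxP hermS _] SS] := msqrtP Prho.
have [[/hermsymmxP hermR _] RR] := msqrtP Psig.
rewrite /root_fid; set S := msqrt rho in PT SRE JJ suppJ hermS SS *.
set Rm := msqrt sigma in SRE hermR RR.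
set T := msqrt (S *m sigma *m S) in PT SRE JJ suppJ *.
(* J is a partial isometry; E pads [J^†, E] to a coisometry. *)
pose E := 1%:M - J^t* *m J.
have EE : E *m E^t* = E.
  rewrite trmxCB trmxC1 trmxC_mul trmxCK -/E mulmxBl mul1mx mulmxBr mulmx1.
  by rewrite -!mulmxA (mulmxA J) JJ suppJ subrr subr0.
exists (row_mx S 0), (row_mx (Rm *m J^t*) (Rm *m E)); split.
- by rewrite gram_row_mx hermS mul0mx addr0 SS.
- rewrite gram_row_mx !trmxC_mul trmxCK hermR !mulmxA -(mulmxA Rm (J^t*)).
  rewrite -(mulmxA Rm E) EE -mulmxDl -mulmxDr /E addrC subrK.
  by rewrite mulmx1 RR.
- rewrite hsdot_row_mx /hsdot trmxC0 mul0mx mxtrace0 addr0 hermS mulmxA SRE.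
  by rewrite -mulmxA JJ (mul_suppmx PT.1).
Qed.

End Uhlmann.

Section Rotation.
Variable C : numClosedFieldType.

Definition rotmx k (c s : C) : 'M[C]_(k + k) := block_mx c%:M s%:M (- s%:M) c%:M.

Lemma rotmx_unitary k (c s : C) :
  c^* = c -> s^* = s -> c ^+ 2 + s ^+ 2 = 1 -> rotmx k c s \is unitarymx.
Proof.
move=> c_real s_real cs1; apply/unitarymxP.
rewrite /rotmx tr_block_mx map_block_mx !linearN /= !map_mxN !tr_scalar_mx.
rewrite !map_scalar_mx /= c_real s_real mulmx_block !mulmxN !mulNmx -!scalar_mxM.
rewrite [RHS]scalar_mx_block (mulrC s c) !addNr opprK (addrC (s * s)%:M).
by rewrite -raddfD /= -!expr2 cs1.
Qed.

End Rotation.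

Lemma ler_norm_perturb (C : numClosedFieldType) (F G t r : C) :
  0 <= F -> 0 <= t -> `|G - F| <= 2 * r -> F - 2 * t * r <= `|F + t * (G - F)|.
Proof.
move=> F0 t0 GF; apply: le_trans (lerB_normD _ _).
rewrite ger0_norm // normrM ger0_norm // lerD2l lerN2 -mulrA mulrCA.
exact: ler_wpM2l.
Qed.

Section Dilation.
Variables (C : numClosedFieldType) (n : nat) (O : 'M[C]_n).

Lemma gram_dilation k (a b : C) (X : 'M[C]_(n, k)) :
  row_mx (a *: X) (b *: (O *m X)) *m (row_mx (a *: X) (b *: (O *m X)))^t*
  = (a * a^*) *: (X *m X^t*) + (b * b^*) *: (O *m (X *m X^t*) *m O^t*).
Proof.
by rewrite gram_row_mx !trmxCZ -!scalemxAl -!scalemxAr !scalerA trmxC_mul !mulmxA.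
Qed.

Hypotheses (hermO : O^t* = O) (O2 : O *m O = 1%:M).

Lemma hsdot_dilation k (a0 a1 b0 b1 c s : C) (X Y : 'M[C]_(n, k)) :
  a0^* = a0 -> a1^* = a1 ->
  hsdot (row_mx (a0 *: X) (a1 *: (O *m X)))
        (row_mx (b0 *: Y) (b1 *: (O *m Y)) *m rotmx k c s)
  = c * (a0 * b0 + a1 * b1) * hsdot X Y + s * (a1 * b0 - a0 * b1) * hsdot X (O *m Y).
Proof.
move=> a0_real a1_real.
rewrite mul_row_block mulmxN !mul_mx_scalar hsdot_row_mx.
rewrite hsdotBr !hsdotDr !hsdotZl !hsdotZr !hsdot_mull hermO mulmxA O2 mul1mx.
by rewrite a0_real a1_real; ring.
Qed.

End Dilation.

(* The sine of the angle between the unit vectors (√(1-q), √q) and (√(1-p), √p). *)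
Definition mix_sin (R : realType) (p q : R) :=
  Num.sqrt p * Num.sqrt (1 - q) - Num.sqrt (1 - p) * Num.sqrt q.

Lemma mix_sin_sqr_le (R : realType) (eta p q : R) : 0 < eta < 1 ->
  eta <= p <= 1 - eta -> eta <= q <= 1 - eta ->
  2 * mix_sin p q ^+ 2 <= (p - q) ^+ 2 / (eta * (1 - eta)).
Proof.
move=> /andP[eta0 eta1] /andP[p0 p1] /andP[q0 q1].
have [p_ge0 q_ge0 p_le1 q_le1] : [/\ 0 <= p, 0 <= q, 0 <= 1 - p & 0 <= 1 - q] by split; lra.
set u := Num.sqrt p * Num.sqrt (1 - q); set v := Num.sqrt (1 - p) * Num.sqrt q.
have [u0 v0] : 0 <= u /\ 0 <= v by split; rewrite mulr_ge0 ?sqrtr_ge0.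
have u2 : u ^+ 2 = p * (1 - q) by rewrite exprMn !sqr_sqrtr.
have v2 : v ^+ 2 = (1 - p) * q by rewrite exprMn !sqr_sqrtr.
have uv : (u - v) * (u + v) = p - q by rewrite -subr_sqr u2 v2; ring.
have lb : 2 * (eta * (1 - eta)) <= (u + v) ^+ 2 by rewrite sqrrD u2 v2; nra.
rewrite ler_pdivlMr ?mulr_gt0 ?subr_gt0 // -uv exprMn /mix_sin -/u -/v.
by rewrite [2 * _]mulrC -mulrA ler_wpM2l ?sqr_ge0.
Qed.

Section ReflectionMixture.
Variables (R : realType) (n : nat) (O P : 'M[R[i]]_n).
Hypotheses (hermO : O^t* = O) (O2 : O *m O = 1%:M).
Hypotheses (hermP : P^t* = P) (P2 : P *m P = P).
Hypothesis suppO : P *m (O - 1%:M) *m P = O - 1%:M.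

Definition mixmx (p : R) (rho : 'M[R[i]]_n) :=
  ((1 - p)%:C)%C *: rho + (p%:C)%C *: (O *m rho *m O^t*).

Lemma hsdotxx_proj k (X : 'M[R[i]]_(n, k)) :
  hsdot (P *m X) (P *m X) = \tr (P *m (X *m X^t*)).
Proof. by rewrite hsdot_mull hermP (mulmxA P P) P2 /hsdot mxtrace_mulC mulmxA. Qed.

Lemma mxtrace_proj_ge0 (rho : 'M[R[i]]_n) : psdmx rho -> 0 <= \tr (P *m rho).
Proof.
move=> Prho; have := psd_mxtrace_ge0 (psd_conj P Prho).
by rewrite hermP mxtrace_mulC mulmxA P2.
Qed.

Lemma norm_hsdot_reflection_le k (X Y : 'M[R[i]]_(n, k)) :
  `|hsdot X (O *m Y) - hsdot X Y|
    <= 2 * sqrtC (\tr (P *m (X *m X^t*)) * \tr (P *m (Y *m Y^t*))).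
Proof.
have subE (Z : 'M[R[i]]_(n, k)) : O *m Z - Z = (O - 1%:M) *m Z.
  by rewrite mulmxBl mul1mx.
have -> : hsdot X (O *m Y) - hsdot X Y
          = hsdot (P *m X) (O *m (P *m Y)) - hsdot (P *m X) (P *m Y).
  by rewrite -!hsdotBr !subE hsdot_mull hermP !mulmxA suppO.
rewrite mulr_natl mulr2n -!hsdotxx_proj; apply: le_trans (ler_normB _ _) _.
apply: lerD; last exact: norm_hsdot_le.
have OPY : hsdot (O *m (P *m Y)) (O *m (P *m Y)) = hsdot (P *m Y) (P *m Y).
  by rewrite hsdot_mull hermO (mulmxA O O) O2 mul1mx.
by rewrite -OPY norm_hsdot_le.
Qed.

Lemma root_fid_dilation_ge (a0 a1 b0 b1 : R[i]) (rho sigma : 'M[R[i]]_n) :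
  a0 \is Num.real -> a1 \is Num.real -> b0 \is Num.real -> b1 \is Num.real ->
  a0 ^+ 2 + a1 ^+ 2 = 1 -> b0 ^+ 2 + b1 ^+ 2 = 1 -> psdmx rho -> psdmx sigma ->
  root_fid rho sigma
    - 2 * (a1 * b0 - a0 * b1) ^+ 2 * sqrtC (\tr (P *m rho) * \tr (P *m sigma))
  <= root_fid (a0 ^+ 2 *: rho + a1 ^+ 2 *: (O *m rho *m O^t*))
              (b0 ^+ 2 *: sigma + b1 ^+ 2 *: (O *m sigma *m O^t*)).
Proof.
move=> /conj_Creal a0r /conj_Creal a1r /conj_Creal b0r /conj_Creal b1r ua ub Prho Psig.
have [X [Y [XX YY FE]]] := root_fid_attained Prho Psig.
set c := a0 * b0 + a1 * b1; set s := a1 * b0 - a0 * b1.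
have cs1 : c ^+ 2 + s ^+ 2 = (a0 ^+ 2 + a1 ^+ 2) * (b0 ^+ 2 + b1 ^+ 2).
  by rewrite /c /s; ring.
rewrite ua ub mulr1 in cs1.
have cr : c^* = c by rewrite /c rmorphD !rmorphM /= a0r a1r b0r b1r.
have sr : s^* = s by rewrite /s rmorphB !rmorphM /= a0r a1r b0r b1r.
(* (c, s) rotates (b0, b1) onto (a0, a1); rotating the second factor by it turns the
   overlap of the two dilations into F + s^2 (tr (X^† O Y) - F). *)
pose X' := row_mx (a0 *: X) (a1 *: (O *m X)).
pose Y' := row_mx (b0 *: Y) (b1 *: (O *m Y)) *m rotmx _ c s.
have XX' : X' *m X'^t* = a0 ^+ 2 *: rho + a1 ^+ 2 *: (O *m rho *m O^t*).
  by rewrite /X' gram_dilation a0r a1r -!expr2 XX.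
have YY' : Y' *m Y'^t* = b0 ^+ 2 *: sigma + b1 ^+ 2 *: (O *m sigma *m O^t*).
  rewrite /Y' gram_mulmx_unitary; last exact: rotmx_unitary.
  by rewrite gram_dilation b0r b1r -!expr2 YY.
have F0 : 0 <= hsdot X Y.
  by have := norm_hsdot_le_root_fid X Y; rewrite XX YY -FE; apply: le_trans.
have := norm_hsdot_le_root_fid X' Y'; rewrite XX' YY' hsdot_dilation // -/c -/s -FE.
have -> : c * c * hsdot X Y + s * s * hsdot X (O *m Y)
          = hsdot X Y + s ^+ 2 * (hsdot X (O *m Y) - hsdot X Y).
  have cc : c * c = 1 - s ^+ 2 by rewrite -cs1 addrK expr2.
  by rewrite cc; ring.
apply: le_trans; rewrite -XX -YY.
apply: ler_norm_perturb; rewrite ?norm_hsdot_reflection_le //.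
by rewrite expr2 -{2}sr mul_conjC_ge0.
Qed.

Lemma root_fid_mixmx_ge (p q : R) (rho sigma : 'M[R[i]]_n) :
  0 <= p <= 1 -> 0 <= q <= 1 -> psdmx rho -> psdmx sigma ->
  root_fid rho sigma
    - ((2 * mix_sin p q ^+ 2)%:C)%C * sqrtC (\tr (P *m rho) * \tr (P *m sigma))
  <= root_fid (mixmx p rho) (mixmx q sigma).
Proof.
move=> p01 q01 Prho Psig.
have sqrt_real (x : R) : ((Num.sqrt x)%:C)%C \is Num.real.
  by apply/complex_realP; exists (Num.sqrt x).
have sqrt_sqr (x : R) : 0 <= x -> ((Num.sqrt x)%:C)%C ^+ 2 = (x%:C)%C.
  by move=> x0; rewrite -rmorphXn sqr_sqrtr.
have unit (x : R) :
    0 <= x <= 1 -> ((Num.sqrt (1 - x))%:C)%C ^+ 2 + ((Num.sqrt x)%:C)%C ^+ 2 = 1.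
  by case/andP=> x0 x1; rewrite !sqrt_sqr ?subr_ge0 // -rmorphD subrK.
have := root_fid_dilation_ge (sqrt_real _) (sqrt_real _) (sqrt_real _) (sqrt_real _)
          (unit p p01) (unit q q01) Prho Psig.
case/andP: p01 => p0 p1; case/andP: q01 => q0 q1.
have realc2 (y : R) : ((2 * y)%:C)%C = 2 * (y%:C)%C.
  by rewrite -(rmorph_nat (real_complex R) 2) -rmorphM.
by rewrite !sqrt_sqr ?subr_ge0 // -!rmorphM -rmorphB -rmorphXn -realc2.
Qed.

End ReflectionMixture.

Section Tensor.
Variable K : comPzRingType.

Lemma tensmxDr m1 n1 m2 n2 (A : 'M[K]_(m1, n1)) (B B' : 'M[K]_(m2, n2)) :
  A *t (B + B') = A *t B + A *t B'.
Proof. by apply/matrixP => r c; rewrite !mxE mulrDr. Qed.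

Lemma tensmxBr m1 n1 m2 n2 (A : 'M[K]_(m1, n1)) (B B' : 'M[K]_(m2, n2)) :
  A *t (B - B') = A *t B - A *t B'.
Proof. by apply/matrixP => r c; rewrite !mxE mulrBr. Qed.

Lemma tens_delta_mx m1 m2 (j : 'I_m1) (a : 'I_m2) :
  (delta_mx j 0 : 'cV[K]_m1) *t (delta_mx a 0 : 'cV[K]_m2)
  = delta_mx (mxtens_index (j, a)) (mxtens_index (0, 0)).
Proof.
apply/matrixP => r c.
case: (mxtens_indexP r) => x y; case: (mxtens_indexP c) => z t.
rewrite tensmxE !mxE !(inj_eq (can_inj (@mxtens_indexK _ _))) !xpair_eqE.
by case: (x == j); case: (y == a); case: (z == 0); case: (t == 0); rewrite ?mulr1 ?mulr0.
Qed.

Lemma mulmx_delta_mxE m n p (X : 'M[K]_(m, n)) r k (c : 'I_p) :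
  (X *m delta_mx k c) r c = X r k.
Proof.
rewrite mxE (bigD1 k) //= !mxE !eqxx mulr1 big1 ?addr0 // => l /negbTE lk.
by rewrite !mxE lk mulr0.
Qed.

Lemma tensmx_basis_eq m1 m2 (A B : 'M[K]_(m1 * m2)) :
  (forall j a, A *m ((delta_mx j 0 : 'cV_m1) *t (delta_mx a 0 : 'cV_m2))
             = B *m ((delta_mx j 0 : 'cV_m1) *t (delta_mx a 0 : 'cV_m2))) ->
  A = B.
Proof.
move=> AB; apply/matrixP => r k; case: (mxtens_indexP k) => j a.
have := congr1 (fun Z : 'M_(_, 1 * 1) => Z r (mxtens_index (0 : 'I_1, 0 : 'I_1))) (AB j a).
by rewrite tens_delta_mx !mulmx_delta_mxE.
Qed.

End Tensor.

Section Oracle.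
Variables (C : numClosedFieldType) (N M : nat) (i : 'I_N).
Variables (U : 'M[C]_M) (O : 'M[C]_(N * M)).
Hypothesis Oi : forall w : 'cV[C]_M,
  O *m (delta_mx i (0 : 'I_1) *t w) = delta_mx i (0 : 'I_1) *t (U *m w).
Hypothesis Oj : forall (j : 'I_N) (w : 'cV[C]_M), j != i ->
  O *m (delta_mx j (0 : 'I_1) *t w) = delta_mx j (0 : 'I_1) *t w.

Local Notation D := (delta_mx i i : 'M[C]_N).

Lemma oracle_sub1 : O - 1%:M = D *t (U - 1%:M).
Proof.
apply: tensmx_basis_eq => j a; rewrite mulmxBl mul1mx tensmx_mul.
have [->|ji] := eqVneq j i; last by rewrite Oj // mul_delta_mx_0 1?eq_sym // tens0mx subrr.
by rewrite Oi mul_delta_mx mulmxBl mul1mx -tensmxBr.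
Qed.

Lemma oracle_unitary : U \is unitarymx -> O^t* *m O = 1%:M.
Proof.
move=> /unitarymxP/mulmx1C UU; have OE : O = 1%:M + D *t (U - 1%:M).
  by rewrite -oracle_sub1 addrC subrK.
rewrite OE trmxCD trmxC1 trmxC_tens trmxC_delta trmxCB trmxC1 mulmxDl !mulmxDr.
rewrite !mul1mx mulmx1 tensmx_mul mul_delta_mx -addrA -!tensmxDr.
have -> : U - 1%:M + (U^t* - 1%:M + (U^t* - 1%:M) *m (U - 1%:M)) = 0.
  rewrite mulmxBl !mulmxBr UU !mul1mx mulmx1 addrA.
  by rewrite -(opprB (U^t*)) -opprD (addrC (U^t* - 1%:M)) subrr.
by rewrite tensmx0 addr0.
Qed.

Lemma oracle_sub1_supp :
  (D *t 1%:M) *m (O - 1%:M) *m (D *t 1%:M) = O - 1%:M.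
Proof. by rewrite oracle_sub1 !tensmx_mul !mul_delta_mx mul1mx mulmx1. Qed.

End Oracle.

Theorem lemma1 (R : realType) (N M : nat) (i : 'I_N)
  (U : 'M[R[i]]_M) (O : 'M[R[i]]_(N * M)) (eta : R) :
  U \is unitarymx ->
  (forall w : 'cV[R[i]]_M,
      O *m (delta_mx i (0 : 'I_1) *t w) = delta_mx i (0 : 'I_1) *t (U *m w)) ->
  (forall (j : 'I_N) (w : 'cV[R[i]]_M), j != i ->
      O *m (delta_mx j (0 : 'I_1) *t w) = delta_mx j (0 : 'I_1) *t w) ->
  adjmx O = O ->
  0 < eta < 1 ->
  let Fch (p : R) (rho : 'M[R[i]]_(N * M)) :=
      ((1 - p)%:C)%C *: rho + (p%:C)%C *: (O *m rho *m adjmx O) in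
  let P : 'M[R[i]]_(N * M) := delta_mx i i *t (1%:M : 'M[R[i]]_M) in
  forall (rho sigma : 'M[R[i]]_(N * M)) (p q : R),
    density rho -> density sigma ->
    eta <= p <= 1 - eta -> eta <= q <= 1 - eta ->
    root_fid rho sigma
      - ((((p - q) ^+ 2) / (eta * (1 - eta)))%:C)%C
        * sqrtC (\tr (P *m rho) * \tr (P *m sigma))
    <= root_fid (Fch p rho) (Fch q sigma).
Proof.
move=> uU Oi Oj hermO eta01 Fch P rho sigma p q [Prho _] [Psig _] p_eta q_eta.
have O2 : O *m O = 1%:M by rewrite -{1}hermO (oracle_unitary Oi Oj uU).
have hermP : adjmx P = P by rewrite /adjmx trmxC_tens trmxC_delta trmxC1.
have P2 : P *m P = P by rewrite tensmx_mul mul_delta_mx mulmx1.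
have [p01 q01] : 0 <= p <= 1 /\ 0 <= q <= 1.
  move: eta01 p_eta q_eta => /andP[? ?] /andP[? ?] /andP[? ?].
  by split; apply/andP; split; lra.
have suppO := oracle_sub1_supp Oi Oj.
apply: le_trans (root_fid_mixmx_ge hermO O2 hermP P2 suppO p01 q01 Prho Psig).
rewrite lerD2l lerN2 ler_wpM2r ?sqrtC_ge0 ?mulr_ge0 ?mxtrace_proj_ge0 // lecR.
exact: mix_sin_sqr_le.
Qed.
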